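(* Let $\mathcal A$ be a cluster algebra and let $\mathcal A(\Sigma_1)\supsetneq\mathcal A(\Sigma_2)\supsetneq\cdots\supsetneq\mathcal A(\Sigma_s)$ be a strictly descending sequence of Galois-like extension subalgebras of $\mathcal A$. Then $\mathrm{Gal}_{\Sigma_1}\mathcal A<\mathrm{Gal}_{\Sigma_2}\mathcal A<\cdots<\mathrm{Gal}_{\Sigma_s}\mathcal A$ is a strictly ascending sequence of subgroups of $\mathrm{Aut}\,\mathcal A$.
   Context: $\mathrm{Aut}\,\mathcal A$: group of cluster automorphisms. Cluster subalgebras $\mathcal A(\Sigma')$ arise from mixing-type sub-seeds of seeds of $\mathcal A$. $\mathrm{Gal}_{\Sigma'}\mathcal A=\{f\in\mathrm{Aut}\,\mathcal A: f|_{\mathcal A(\Sigma')}=\mathrm{id}\}$; $\mathcal A^H=\{z\in\mathcal A: f(z)=z\ \forall f\in H\}$; $\mathcal M^H_{sub}$ is the set of cluster subalgebras $\mathcal A(\Sigma')$ maximal (under inclusion) among cluster subalgebras contained in $\mathcal A^H$ and satisfying $\mathrm{Gal}_{\Sigma'}\mathcal A=H$. A cluster subalgebra is a Galois-like extension subalgebra if it belongs to $\mathcal M^H_{sub}$ for some $H\le\mathrm{Aut}\,\mathcal A$ (necessarily $H=\mathrm{Gal}_{\Sigma'}\mathcal A$). *)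

From HB Require Import structures.
From mathcomp Require Import all_boot all_order all_algebra all_fingroup.
From mathcomp Require Import fraction.
From mathcomp Require Import mpoly.
Set Implicit Arguments. Unset Strict Implicit. Unset Printing Implicit Defensive.
Import GRing.Theory Num.Theory.
Local Open Scope ring_scope.

Definition ambient (m : nat) : fieldType := {fraction {mpoly int[m]}}.

(* A (labelled) seed of geometric type on the index set 'I_m:
   exchangeable indices, frozen indices, the extended cluster, and the
   extended exchange matrix (b_ij meaningful for i in ex :|: fr, j in ex). *)
Record seed (m : nat) := Seed {
  sex : {set 'I_m};
  sfr : {set 'I_m};
  sx  : 'I_m -> ambient m;
  sB  : 'I_m -> 'I_m -> int }.

Section Cluster.
Variable m : nat.
Local Notation F := (ambient m).

Definition mut_mat (B : 'I_m -> 'I_m -> int) (k : 'I_m) : 'I_m -> 'I_m -> int :=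
  fun i j => if (i == k) || (j == k) then - B i j
             else B i j + Num.sg (B i k) * Num.max (B i k * B k j) 0.

Definition mutate (S : seed m) (k : 'I_m) : seed m :=
  if k \in sex S then
    let P := \prod_(i in sex S :|: sfr S | 0 < sB S i k) sx S i ^+ absz (sB S i k) in
    let Q := \prod_(i in sex S :|: sfr S | sB S i k < 0) sx S i ^+ absz (sB S i k) in
    Seed (sex S) (sfr S)
         (fun i => if i == k then (P + Q) / sx S k else sx S i)
         (mut_mat (sB S) k)
  else S.

Definition mutate_seq (S : seed m) (ks : seq 'I_m) : seed m := foldl mutate S ks.

Definition reachable (S S' : seed m) : Prop := exists ks, S' = mutate_seq S ks.

Definition cl_generators (S : seed m) (z : F) : Prop :=
  exists ks i, i \in sex S :|: sfr S /\ z = sx (mutate_seq S ks) i.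

Definition subring_closedP (P : F -> Prop) : Prop :=
  [/\ P 1, (forall a b, P a -> P b -> P (a - b)) & (forall a b, P a -> P b -> P (a * b))].

Definition gen_ring (G : F -> Prop) (z : F) : Prop :=
  forall P, subring_closedP P -> (forall y, G y -> P y) -> P z.

Definition clust_alg (S : seed m) : F -> Prop := gen_ring (cl_generators S).

Definition init_seed (ex : {set 'I_m}) (B : 'I_m -> 'I_m -> int) : seed m :=
  Seed ex (~: ex) (fun i => FracField.tofrac ('X_i : {mpoly int[m]})) B.

Definition skew_symmetrizable (ex : {set 'I_m}) (B : 'I_m -> 'I_m -> int) : Prop :=
  exists d : 'I_m -> nat, (forall i, (0 < d i)%N) /\
    forall i j, i \in ex -> j \in ex -> (d i)%:Z * B i j = - ((d j)%:Z * B j i).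

(* mixing-type sub-seed Sigma_{I0,I1}: delete the variables in I0, freeze those in I1 *)
Definition sub_seed (S : seed m) (I0 I1 : {set 'I_m}) : seed m :=
  Seed (sex S :\: (I0 :|: I1)) ((sfr S :|: I1) :\: I0) (sx S) (sB S).

Section OverA.
Variable S0 : seed m.

Definition is_mixing_subseed (S' : seed m) : Prop :=
  exists S (I0 I1 : {set 'I_m}), [/\ reachable S0 S, [disjoint I0 & I1],
    I0 :|: I1 \subset sex S :|: sfr S & S' = sub_seed S I0 I1].

Definition subsetP' (P Q : F -> Prop) : Prop := forall z, P z -> Q z.

Definition is_cluster_subalg (S' : seed m) : Prop :=
  is_mixing_subseed S' /\ subsetP' (clust_alg S') (clust_alg S0).

(* ring automorphism of A (f is a map F -> F, only its restriction to A matters) *)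
Definition is_ring_aut (f : F -> F) : Prop :=
  let A := clust_alg S0 in
  [/\ forall z, A z -> A (f z),
      forall w, A w -> exists2 z, A z & f z = w,
      forall z w, A z -> A w -> f z = f w -> z = w,
      f 1 = 1 &
      forall z w, A z -> A w -> f (z + w) = f z + f w /\ f (z * w) = f z * f w].

Definition is_cluster_aut (f : F -> F) : Prop :=
  is_ring_aut f /\
  exists S S' (sigma : {perm 'I_m}),
    [/\ reachable S0 S /\ reachable S0 S',
        sigma @: sex S = sex S', sigma @: sfr S = sfr S',
        (forall i, i \in sex S :|: sfr S -> f (sx S i) = sx S' (sigma i)) &
        (forall k, k \in sex S ->
           f (sx (mutate S k) k) = sx (mutate S' (sigma k)) (sigma k))].

Definition Gal (S' : seed m) (f : F -> F) : Prop :=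
  is_cluster_aut f /\ forall z, clust_alg S' z -> f z = z.

Definition fixed_alg (H : (F -> F) -> Prop) (z : F) : Prop :=
  clust_alg S0 z /\ forall f, H f -> f z = z.

Definition same_group (G H : (F -> F) -> Prop) : Prop := forall f, G f <-> H f.

Definition in_Msub (H : (F -> F) -> Prop) (S' : seed m) : Prop :=
  [/\ is_cluster_subalg S',
      subsetP' (clust_alg S') (fixed_alg H),
      same_group (Gal S') H &
      forall S'', is_cluster_subalg S'' ->
        subsetP' (clust_alg S'') (fixed_alg H) ->
        same_group (Gal S'') H ->
        subsetP' (clust_alg S') (clust_alg S'') ->
        subsetP' (clust_alg S'') (clust_alg S')].

Definition galois_like (S' : seed m) : Prop :=
  exists H : (F -> F) -> Prop, (forall f, H f -> is_cluster_aut f) /\ in_Msub H S'.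

End OverA.

Definition strict_subset {T} (P Q : T -> Prop) : Prop :=
  (forall z, P z -> Q z) /\ exists z, Q z /\ ~ P z.

End Cluster.

From HB Require Import structures.
From mathcomp Require Import all_boot all_order all_algebra all_fingroup.
From mathcomp Require Import fraction mpoly.
From Stdlib Require Import Classical.

(* Passing to a smaller subalgebra can only enlarge the group fixing it, so
   [Gal] is antitone.  If the inclusion of groups were an equality, the larger
   subalgebra would lie in the fixed algebra of the group of the smaller one and
   have the same Galois group, so maximality of the smaller one in [M^H_sub]
   forces the two subalgebras to coincide. *)

Section GaloisCorrespondence.

Variables (m : nat) (S0 : seed m).

Lemma Gal_antitone {S1 S2 : seed m} :
  subsetP' (clust_alg S2) (clust_alg S1) -> forall f, Gal S0 S1 f -> Gal S0 S2 f.
Proof. by move=> sub21 f [autf fixf]; split=> // z /sub21; apply: fixf. Qed.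

Lemma clust_alg_sub_fixed_Gal {S' : seed m} :
  is_cluster_subalg S0 S' -> subsetP' (clust_alg S') (fixed_alg S0 (Gal S0 S')).
Proof. by move=> [_ subA] z Az; split; [apply: subA | move=> f [_]; apply]. Qed.

Lemma galois_like_maximal {S1 S2 : seed m} :
  is_cluster_subalg S0 S1 -> galois_like S0 S2 ->
  subsetP' (clust_alg S2) (clust_alg S1) ->
  same_group (Gal S0 S1) (Gal S0 S2) ->
  subsetP' (clust_alg S1) (clust_alg S2).
Proof.
move=> cs1 [H [_ [_ _ GalH maxH]]] sub21 eqGal.
have eqH : same_group (Gal S0 S1) H.
  by move=> f; rewrite eqGal; apply: GalH.
apply: maxH => //.
move=> z /(clust_alg_sub_fixed_Gal cs1) [Az fixz].
by split=> // f /eqH; apply: fixz.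
Qed.

Lemma Gal_strict_antitone {S1 S2 : seed m} :
  is_cluster_subalg S0 S1 -> galois_like S0 S2 ->
  strict_subset (clust_alg S2) (clust_alg S1) ->
  strict_subset (Gal S0 S1) (Gal S0 S2).
Proof.
move=> cs1 gl2 [sub21 [z [Az1 nAz2]]].
split; first exact: Gal_antitone.
apply: NNPP => noNew.
have sub12 f : Gal S0 S2 f -> Gal S0 S1 f.
  by move=> Gal2f; apply: NNPP => nGal1f; apply: noNew; exists f.
have eqGal : same_group (Gal S0 S1) (Gal S0 S2).
  by move=> f; split; [apply: Gal_antitone | apply: sub12].
by apply: nAz2; apply: (galois_like_maximal cs1 gl2 sub21 eqGal).
Qed.

End GaloisCorrespondence.

Theorem mainTheorem12 (m : nat) (ex : {set 'I_m}) (B : 'I_m -> 'I_m -> int)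
  (hB : skew_symmetrizable ex B) (s : nat) (S : nat -> seed m) :
  (forall i, i < s -> galois_like (init_seed ex B) (S i)) ->
  (forall i, i.+1 < s -> strict_subset (clust_alg (S i.+1)) (clust_alg (S i))) ->
  forall i, i.+1 < s ->
    strict_subset (Gal (init_seed ex B) (S i)) (Gal (init_seed ex B) (S i.+1)).
Proof.
move=> galS descS i lt_i1s.
have [_ [_ [cs_i _ _ _]]] := galS i (ltnW lt_i1s).
exact: Gal_strict_antitone cs_i (galS _ lt_i1s) (descS _ lt_i1s).
Qed.
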